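(* Fix $1\le p<2$. There is a constant $\alpha_p>0$ depending only on $p$ such that the following holds. Let $n\ge3$, let $X_1,\dots,X_n$ be (possibly dependent) random variables each with distribution $\mathcal{D}_p$, and let $\gamma_1,\dots,\gamma_n>0$ with $\gamma=\sum_i\gamma_i$. Then for every $t\ge1$, $$\Pr\Big[\sum_{i=1}^n\gamma_i|X_i|^p>\alpha_p\gamma t\Big]\le\frac{2\log(nt)}{t}.$$
   Context: $\log$ is the natural logarithm. $\mathcal{D}_p$ denotes the standard symmetric $p$-stable distribution: if $Y_1,\dots,Y_m$ are i.i.d. $\sim\mathcal{D}_p$ and $a\in\mathbb{R}^m$, then $\sum_ia_iY_i$ has the same distribution as $(\sum_i|a_i|^p)^{1/p}Y$ with $Y\sim\mathcal{D}_p$; $\mathcal{D}_1$ is the standard Cauchy distribution. Only the marginal distributions of the $X_i$ are assumed. *)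

From HB Require Import structures.
From mathcomp Require Import all_boot all_order all_algebra.
From mathcomp Require Import all_classical all_reals all_analysis.
Set Implicit Arguments. Unset Strict Implicit. Unset Printing Implicit Defensive.
Import Order.TTheory GRing.Theory Num.Theory.
Local Open Scope ring_scope.
Local Open Scope classical_set_scope.

(* The real random variable X (on the probability space P) has the standard
   symmetric p-stable distribution D_p, i.e. its characteristic function is
   E[exp(i u X)] = exp(-|u|^p) for all real u; written out with real and
   imaginary parts: E[cos(uX)] = exp(-|u|^p) and E[sin(uX)] = 0.
   For p = 1 this is the standard Cauchy distribution. *)
Definition has_std_stable_law (R : realType) (d : measure_display)
  (T : measurableType d) (P : probability T R) (p : R) (X : T -> R) : Prop :=
  forall u : R,
    (\int[P]_w (cos (u * X w))%:E = (expR (- (`|u| `^ p)))%:E)%E /\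
    (\int[P]_w (sin (u * X w))%:E = 0%E)%E.

From HB Require Import structures.
From mathcomp Require Import all_boot all_order all_algebra.
From mathcomp Require Import all_classical all_reals all_analysis.
From mathcomp Require Import ring lra measurable_realfun.
Import Order.TTheory GRing.Theory Num.Theory numFieldNormedType.Exports.
Local Open Scope ring_scope.
Local Open Scope classical_set_scope.

(* Each [|X_i|^p] has a weak-L^1 tail, [P (|X|^p > s) <= C / s]: averaging
   [E [1 - cos (v X)] = 1 - exp (- |v|^p) <= |v|^p] over an arithmetic
   progression of frequencies and bounding the Dirichlet kernel from below
   shows [P (x < |X|) <= 2 (2 / (x cos 1))^p].  Since only these marginal
   tails are used, dependence does not matter: below the level [e^m], each
   [|X_i|^p] is at most [1] plus the sum of [e^(k+1)] over the levels [e^k] it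
   exceeds, each level costs [e C] in expectation, and reaching the top level
   has probability at most [n C / e^m].  Markov's inequality with
   [m ~ ln (n t)] gives the bound [2 ln (n t) / t]. *)

Section trigonometric_sums.
Context {R : realType}.

Lemma cos1_mul_le_sin (y : R) : 0 <= y <= 1 -> cos 1 * y <= sin y.
Proof.
move=> /andP[y0 y1].
have [] := @MVT_segment R sin cos 0 y y0.
- exact/continuous_subspaceT/continuous_sin.
move=> c /[!in_itv]/= /andP[c0 cy].
rewrite sin0 !subr0 => ->; apply: ler_wpM2r => //.
have pi1 : (1 : R) <= pi by apply: le_trans (pi_ge2 R); rewrite ler1n.
have c1 : c <= 1 by apply: le_trans cy y1.
by rewrite leNgt ltr_cos ?in_itv /= ?c0 ?ler01 ?(le_trans c1) // -leNgt.
Qed.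

Lemma dirichlet_kernel (N : nat) (th : R) :
  2 * sin (th / 2) * \sum_(j < N) cos (j.+1%:R * th)
  = sin ((N%:R + 2^-1) * th) - sin (th / 2).
Proof.
pose f (k : nat) := sin ((k%:R + 2^-1) * th).
have step k : 2 * sin (th / 2) * cos (k.+1%:R * th) = f k.+1 - f k.
  rewrite /f -[k.+1%:R]natr1.
  have -> : (k%:R + 1 + 2^-1) * th = (k%:R + 1) * th + th / 2 by field.
  have -> : (k%:R + 2^-1) * th = (k%:R + 1) * th - th / 2 by field.
  by rewrite sinD sinB; ring.
rewrite mulr_sumr (eq_bigr (fun j : 'I_N => f j.+1 - f j)) => [|j _]; last exact: step.
rewrite -(big_mkord xpredT (fun j => f j.+1 - f j)) telescope_sumr //.
by rewrite /f /= add0r [2^-1 * _]mulrC.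
Qed.

Lemma sum_one_sub_cos_ge (th : R) (N : nat) :
  0 < th <= 2 -> 2 <= N%:R * cos 1 * th ->
  N%:R / 2 <= \sum_(j < N) (1 - cos (j.+1%:R * th)).
Proof.
move=> /andP[th0 th2] Nth.
have s_ge : cos 1 * (th / 2) <= sin (th / 2).
  by apply: cos1_mul_le_sin; apply/andP; split; lra.
have s0 : 0 < sin (th / 2).
  by apply: lt_le_trans s_ge; rewrite mulr_gt0 ?cos1_gt0 ?divr_gt0.
rewrite big_split /= sumrN sumr_const card_ord -mulr_natl mulr1.
have := dirichlet_kernel N th; have := sin_le1 ((N%:R + 2^-1) * th).
set S := \sum_(j < N) _; set s := sin (th / 2) in s_ge s0 * => le1 D.
have sS : 2 * s * S <= 1 by lra.
have N0 : 0 <= N%:R :> R := ler0n _ _.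
nra.
Qed.

End trigonometric_sums.

Lemma indic_ge0 {R : realType} {U : Type} (A : set U) (w : U) : 0 <= (\1_A w : R).
Proof. by rewrite indicE ler0n. Qed.

Definition mean_le {R : realType} {d : measure_display} {T : measurableType d}
    (P : probability T R) (f : T -> R) (r : R) :=
  [/\ measurable_fun setT f, (forall w, 0 <= f w) &
      (\int[P]_w (f w)%:E <= r%:E)%E].

Section mean_bounds.
Context {R : realType} {d : measure_display} {T : measurableType d}
  {P : probability T R}.

Lemma mean_le_trans {f r r'} : mean_le P f r -> r <= r' -> mean_le P f r'.
Proof.
by move=> [mf f0 If] rr'; split => //; apply: le_trans If _; rewrite lee_fin.
Qed.

Lemma mean_le_cst c : 0 <= c -> mean_le P (fun=> c) c.
Proof.
move=> c0; split => //.
rewrite integral_cst // -[leRHS]mule1 lee_wpmul2l ?lee_fin //.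
exact: probability_le1.
Qed.

Lemma mean_le_indic {A : set T} {r} :
  measurable A -> (P A <= r%:E)%E -> mean_le P (\1_A) r.
Proof.
move=> mA PA; split; [exact: measurable_indic | exact: indic_ge0 |].
by rewrite integral_indic // setIT.
Qed.

Lemma mean_leD {f g r s} :
  mean_le P f r -> mean_le P g s -> mean_le P (fun w => f w + g w) (r + s).
Proof.
move=> [mf f0 If] [mg g0 Ig]; split.
- exact: measurable_funD.
- by move=> w; rewrite addr_ge0.
under eq_integral do rewrite EFinD.
rewrite ge0_integralD // ?EFinD ?leeD //; do ?exact/measurable_EFinP.
all: by move=> w _; rewrite lee_fin.
Qed.

Lemma mean_leZ {c f r} :
  0 <= c -> mean_le P f r -> mean_le P (fun w => c * f w) (c * r).
Proof.
move=> c0 [mf f0 If]; split.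
- exact: measurable_funM.
- by move=> w; rewrite mulr_ge0.
under eq_integral do rewrite EFinM.
rewrite ge0_integralZl_EFin // ?EFinM ?lee_wpmul2l ?lee_fin //.
- by move=> w _; rewrite lee_fin.
- exact/measurable_EFinP.
Qed.

Lemma mean_le_sum (m : nat) (f : 'I_m -> T -> R) (r : 'I_m -> R) :
  (forall j, mean_le P (f j) (r j)) ->
  mean_le P (fun w => \sum_(j < m) f j w) (\sum_(j < m) r j).
Proof.
elim: m f r => [|m IH] f r fr.
  under eq_fun do rewrite big_ord0; rewrite big_ord0; exact: mean_le_cst.
under eq_fun do rewrite big_ord_recl; rewrite big_ord_recl.
by apply: mean_leD => //; apply: IH => j.
Qed.

Lemma mean_le_markov {f r} {A : set T} {c} :
  mean_le P f r -> measurable A -> 0 < c -> (forall w, A w -> c <= f w) ->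
  (P A <= (r / c)%:E)%E.
Proof.
move=> [mf f0 If] mA c0 cf.
have cA_le : (c%:E * P A <= r%:E)%E.
  have -> : P A = (\int[P]_w (\1_A w)%:E)%E by rewrite integral_indic // setIT.
  rewrite -ge0_integralZl_EFin //; last 2 first.
  - by apply/measurable_EFinP; exact: measurable_indic.
  - exact: ltW.
  apply: le_trans If; apply: ge0_le_integral => //.
  - by move=> w _; rewrite lee_fin mulr_ge0 ?indic_ge0 ?ltW.
  - by apply/measurable_EFinP; apply: measurable_funM => //; exact: measurable_indic.
  - exact/measurable_EFinP.
  move=> w _; rewrite lee_fin indicE.
  have [Aw|nAw] := pselect (A w).
    by rewrite mem_set // mulr1 cf.
  by rewrite memNset // mulr0 f0.
move: cA_le; rewrite -(fineK (fin_num_measure P _ mA)) -EFinM !lee_fin.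
by rewrite ler_pdivlMr // mulrC.
Qed.

End mean_bounds.

Section measurable_level_sets.
Context {R : realType} {d : measure_display} {T : measurableType d}.
Variable f : T -> R.
Hypothesis mf : measurable_fun setT f.

Lemma measurable_fun_in_itv (i : interval R) : measurable [set w | f w \in i].
Proof. by have := mf measurableT _ (measurable_itv i); rewrite setTI. Qed.

Lemma measurable_fun_gt (s : R) : measurable [set w | s < f w].
Proof.
rewrite (_ : [set w | s < f w] = [set w | f w \in `]s, +oo[%R]).
  exact: measurable_fun_in_itv.
by apply/seteqP; split => w /=; rewrite in_itv /= andbT.
Qed.

End measurable_level_sets.

Lemma powR_div {R : realType} (a x r : R) :
  0 <= a -> 0 < x -> (a / x) `^ r = a `^ r / x `^ r.
Proof.
move=> a0 x0; rewrite powRM ?invr_ge0 ?(ltW x0) //.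
by rewrite -powR_inv1 ?(ltW x0) // -powRrM mulN1r powRN.
Qed.

Section stable_tail.
Context {R : realType} {d : measure_display} {T : measurableType d}
  (P : probability T R) (p : R) (X : T -> R).
Hypotheses (mX : measurable_fun setT X) (p0 : 0 < p)
  (hX : has_std_stable_law P p X).

Let mabsX : measurable_fun setT (fun w => `|X w|) :=
  measurableT_comp (@normr_measurable R setT) mX.

Lemma mean_le_one_sub_cos (v : R) :
  mean_le P (fun w => 1 - cos (v * X w)) (`|v| `^ p).
Proof.
have mcos : measurable_fun setT (fun w => cos (v * X w)).
  apply: (measurableT_comp (f := cos) (g := fun w => v * X w)).
    by apply: continuous_measurable_fun; exact: continuous_cos.
  exact: measurable_funM.
split.
- exact: measurable_funB.
- by move=> w; rewrite subr_ge0 cos_le1.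
under eq_integral do rewrite EFinB.
rewrite integralB_EFin //; last 2 first.
- exact: finite_measure_integrable_cst.
- apply: measurable_bounded_integrable => //.
    by rewrite (le_lt_trans (probability_le1 P measurableT)) // ltry.
  exists 1; split => // M M1 y _.
  by rewrite /= (le_trans (cos_max _)) // ltW.
rewrite (hX v).1 integral_cst // mul1e.
apply: le_trans (_ : (1 - (expR (- (`|v| `^ p)))%:E <= _)%E).
  by rewrite leeB // probability_le1.
by rewrite -EFinB lee_fin; have := expR_ge1Dx (- (`|v| `^ p)); lra.
Qed.

(* Markov's inequality for the average of [1 - cos (v X)] over the frequencies
   [v = j u / N], [1 <= j <= N]; the truncation [|X| <= k] lets [N] be chosen
   so large that the phase step stays in [0, 2], where the Dirichlet kernel
   makes the average at least [1/2]. *)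
Lemma stable_window_le (x : R) (k : nat) : 0 < x ->
  (P [set w | (`|X w| \in `]x, k%:R])%R] <= (2 * (2 / (cos 1 * x)) `^ p)%:E)%E.
Proof.
move=> x0; have c10 : 0 < cos 1 :> R := cos1_gt0 R.
set u := 2 / (cos 1 * x); have u0 : 0 < u by rewrite divr_gt0 ?mulr_gt0.
pose N := (Num.truncn (u * k%:R / 2)).+1.
have NK : u * k%:R / 2 <= N%:R by apply/ltW/truncnS_gt.
have N0 : 0 < N%:R :> R by rewrite ltr0n.
pose h := u / N%:R; have h0 : 0 < h by rewrite divr_gt0.
pose f w := \sum_(j < N) (1 - cos (j.+1%:R * h * X w)).
have mean_f : mean_le P f (\sum_(j < N) u `^ p).
  apply: mean_le_sum => j; apply: mean_le_trans (mean_le_one_sub_cos _) _.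
  have jh0 : 0 <= j.+1%:R * h by rewrite mulr_ge0 // ltW.
  rewrite ger0_norm //; apply: ge0_ler_powR; rewrite ?nnegrE ?(ltW p0) ?(ltW u0) //.
  by rewrite /h mulrA ler_pdivrMr // mulrC ler_pM2l // ler_nat.
have mA := measurable_fun_in_itv _ mabsX `]x, k%:R]%R.
apply: le_trans (mean_le_markov mean_f mA (divr_gt0 N0 (ltr0Sn _ 1)) _) _.
  move=> w /=; rewrite in_itv /= => /andP[xw wk].
  have -> : f w = \sum_(j < N) (1 - cos (j.+1%:R * (h * `|X w|))).
    by apply: eq_bigr => j _; rewrite -cos_norm normrM mulrA ger0_norm // mulr_ge0 ?ltW.
  have a0 : 0 < `|X w| by apply: lt_trans xw.
  apply: sum_one_sub_cos_ge.
    rewrite mulr_gt0 //= (@le_trans _ _ (h * k%:R)) ?ler_pM2l //.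
    by rewrite /h mulrAC ler_pdivrMr //; lra.
  have -> : N%:R * cos 1 * (h * `|X w|) = 2 * (`|X w| / x).
    by rewrite /h /u; field; rewrite !gt_eqF.
  by rewrite ler_pMr // ler_pdivlMr // mul1r ltW.
rewrite sumr_const card_ord -mulr_natl lee_fin.
by rewrite [leLHS](_ : _ = 2 * u `^ p) //; field; rewrite gt_eqF.
Qed.

Lemma stable_tail_le (x : R) : 0 < x ->
  (P [set w | (x < `|X w|)%R] <= (2 * (2 / (cos 1 * x)) `^ p)%:E)%E.
Proof.
move=> x0; pose F k := [set w | (`|X w| \in `]x, k%:R])%R].
have F_cup : \bigcup_k F k = [set w | x < `|X w|].
  apply/seteqP; split => w /=.
    by move=> [k _]; rewrite /F /= in_itv /= => /andP[].
  move=> xw; exists (Num.truncn `|X w|).+1 => //.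
  by rewrite /F /= in_itv /= xw ltW // truncnS_gt.
have F_nd : nondecreasing_seq F.
  move=> i j ij; apply/subsetPset => w; rewrite /F /= !in_itv /= => /andP[-> wi].
  by rewrite (le_trans wi) // ler_nat.
have := @nondecreasing_cvg_mu _ _ _ P F (fun k => measurable_fun_in_itv _ mabsX _) _ F_nd.
rewrite F_cup => /(_ (measurable_fun_gt _ mabsX _)) PF_cvg.
apply: lee_cvg_to PF_cvg (cvg_cst _) _.
by apply: nearW => k; exact: stable_window_le.
Qed.

Definition stable_tail_const : R := 2 * (2 / cos 1) `^ p.

Lemma stable_tail_powR (s : R) : 0 < s ->
  (P [set w | (s < `|X w| `^ p)%R] <= (stable_tail_const / s)%:E)%E.
Proof.
move=> s0; set x := s `^ p^-1.
have x0 : 0 < x by rewrite powR_gt0.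
have xp : x `^ p = s by rewrite -powRrM mulVf ?gt_eqF // powRr1 // ltW.
have -> : [set w | s < `|X w| `^ p] = [set w | x < `|X w|].
  apply/seteqP; split => w /=; rewrite -xp.
    apply: contraTT; rewrite -!leNgt => le_x.
    by apply: ge0_ler_powR; rewrite ?nnegrE ?(ltW p0) ?(ltW x0).
  by apply: gt0_ltr_powR; rewrite ?nnegrE ?(ltW x0).
apply: le_trans (stable_tail_le _ x0) _.
have c10 : 0 < cos 1 :> R := cos1_gt0 R.
rewrite lee_fin /stable_tail_const invfM mulrA powR_div ?xp ?mulrA //.
by rewrite divr_ge0 // ltW.
Qed.

End stable_tail.

Section exp_layers.
Context {R : realType}.

Definition exp_layer_bound (m : nat) (y : R) : R :=
  1 + \sum_(k < m) expR k.+1%:R * \1_[set z | expR k%:R < z] y.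

Lemma exp_layer_bound_ge1 m y : 1 <= exp_layer_bound m y.
Proof.
rewrite lerDl; apply: sumr_ge0 => k _.
by rewrite mulr_ge0 ?indic_ge0 // ltW // expR_gt0.
Qed.

Lemma le_exp_layer_bound m y : y <= expR m%:R -> y <= exp_layer_bound m y.
Proof.
elim: m => [|m IH] ym; first by rewrite /exp_layer_bound big_ord0 addr0 -expR0.
rewrite /exp_layer_bound big_ord_recr /= addrA.
have [ym'|ym'] := lerP y (expR m%:R).
  apply: le_trans (IH ym') _; rewrite lerDl.
  by rewrite mulr_ge0 ?indic_ge0 // ltW // expR_gt0.
rewrite indicE mem_set // mulr1; have := exp_layer_bound_ge1 m y.
rewrite /exp_layer_bound; lra.
Qed.

Lemma le_sum_exp_layer_bounds (n m : nat) (c : R) (g y : 'I_n -> R) :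
  (forall i, 0 < g i) -> 0 <= c -> c < \sum_(i < n) g i * y i ->
  c <= \sum_(i < n) (c * \1_[set z | expR m%:R < z] (y i)
                     + g i * exp_layer_bound m (y i)).
Proof.
move=> g0 c0 cgy.
have term_ge0 i : 0 <= c * \1_[set z | expR m%:R < z] (y i)
                       + g i * exp_layer_bound m (y i).
  rewrite addr_ge0 ?mulr_ge0 ?indic_ge0 ?(ltW (g0 i)) //.
  exact: le_trans ler01 (exp_layer_bound_ge1 m (y i)).
have [[i yi]|] := pselect (exists i, expR m%:R < y i).
  rewrite (bigD1 i) //= indicE mem_set // mulr1 -addrA lerDl.
  rewrite addr_ge0 ?sumr_ge0 // mulr_ge0 ?(ltW (g0 i)) //.
  exact: le_trans ler01 (exp_layer_bound_ge1 m (y i)).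
move=> /forallNP small; apply: (ltW (lt_le_trans cgy _)); apply: ler_sum => i _.
rewrite -[leLHS]add0r lerD ?mulr_ge0 ?indic_ge0 // ler_wpM2l ?(ltW (g0 i)) //.
by apply: le_exp_layer_bound; rewrite leNgt; apply/negP/small.
Qed.

End exp_layers.

Section log_budget.
Context {R : realType}.

Definition weak_sum_const (C : R) : R :=
  (1 + expR 1 * C * (C / ln 3 + 1)) / ln 3 + expR 1 * C.

Lemma ln3_gt0 : 0 < ln 3 :> R.
Proof. by rewrite ln_gt0 // ltr1n. Qed.

Lemma weak_sum_const_gt0 (C : R) : 0 <= C -> 0 < weak_sum_const C.
Proof.
move=> C0; have e0 := expR_gt0 (1 : R); have l0 := ln3_gt0.
have eC0 : 0 <= expR 1 * C by rewrite mulr_ge0 // ltW.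
have A0 : 0 <= expR 1 * C * (C / ln 3 + 1) by rewrite mulr_ge0 ?addr_ge0 ?divr_ge0 // ltW.
have : 0 < (1 + expR 1 * C * (C / ln 3 + 1)) / ln 3 by rewrite divr_gt0 //; lra.
rewrite /weak_sum_const; lra.
Qed.

Lemma layers_le_weak_sum_const (C L : R) (m : nat) :
  0 <= C -> ln 3 <= L -> m%:R <= L + C / ln 3 + 1 ->
  1 + m%:R * expR 1 * C <= weak_sum_const C * L.
Proof.
move=> C0 L3 mL; have l0 := ln3_gt0; set eC := expR 1 * C.
have eC0 : 0 <= eC by rewrite mulr_ge0 // ltW // expR_gt0.
have L_l0 : 1 <= L / ln 3 by rewrite ler_pdivlMr // mul1r.
have num0 : 0 <= 1 + eC * (C / ln 3 + 1).
  by rewrite addr_ge0 // mulr_ge0 // addr_ge0 // divr_ge0 // ltW.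
have le_num := ler_wpM2l num0 L_l0; rewrite mulr1 in le_num.
have le_top := ler_wpM2l eC0 mL.
have -> : weak_sum_const C * L = (1 + eC * (C / ln 3 + 1)) * (L / ln 3) + eC * L.
  by rewrite /weak_sum_const -/eC; field; rewrite gt_eqF.
have -> : 1 + m%:R * expR 1 * C = 1 + eC * m%:R by rewrite /eC; ring.
lra.
Qed.

Lemma top_layer_le (C L t N : R) (m : nat) :
  0 <= C -> ln 3 <= L -> 0 < t -> expR L = N * t -> L + C / ln 3 <= m%:R ->
  N * (C / expR m%:R) <= L / t.
Proof.
move=> C0 L3 t0 eL mL; set K := C / ln 3; set a := N * (C / expR m%:R).
have l0 := ln3_gt0; have eK0 : 0 < expR K := expR_gt0 K.
have N0 : 0 < N by rewrite -(pmulr_lgt0 _ t0) -eL expR_gt0.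
have a0 : 0 <= a by rewrite mulr_ge0 ?divr_ge0 // ltW // expR_gt0.
have em : N * t * expR K <= expR m%:R by rewrite -eL -expRD ler_expR.
have ae : a * expR m%:R = N * C by rewrite /a mulrA mulfVK // gt_eqF // expR_gt0.
have CK : C <= L * expR K.
  have := expR_ge1Dx K; rewrite -(ler_pM2l l0) mulrDr mulr1 /K mulrCA mulfV ?gt_eqF //.
  rewrite mulr1 => le_lK; apply: le_trans (ler_wpM2r (ltW eK0) L3).
  by apply: le_trans le_lK; rewrite lerDr ltW.
have ate : a * t * expR K <= C.
  rewrite -(ler_pM2l N0) -ae.
  have -> : N * (a * t * expR K) = a * (N * t * expR K) by ring.
  by rewrite ler_wpM2l.
by rewrite ler_pdivlMr // -(ler_pM2r eK0) (le_trans ate).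
Qed.

End log_budget.

Section weak_tail_sums.
Context {R : realType} {d : measure_display} {T : measurableType d}
  (P : probability T R) (n : nat) (Y : 'I_n -> T -> R) (g : 'I_n -> R) (C : R).
Hypotheses (mY : forall i, measurable_fun setT (Y i)) (g0 : forall i, 0 < g i)
  (C0 : 0 <= C)
  (tailY : forall i s, 0 < s -> (P [set w | (s < Y i w)%R] <= (C / s)%:E)%E).

Let gamma := \sum_(i < n) g i.

Lemma mean_le_indic_tail i (s : R) : 0 < s ->
  mean_le P (fun w => \1_[set z | s < z] (Y i w)) (C / s).
Proof.
move=> s0; change (mean_le P (\1_[set w | s < Y i w]) (C / s)).
exact: mean_le_indic (measurable_fun_gt _ (mY i) s) (tailY i _ s0).
Qed.

(* Markov's inequality for the layer majorant: the level [Y i > e^k] costs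
   [e^(k+1) * C / e^k = e C] in expectation whatever the dependence between
   the [Y i], and exceeding the top level [e^m] is charged the whole
   threshold [c]. *)
Lemma weak_tail_sum_le (c : R) (m : nat) : 0 < c ->
  (P [set w | (c < \sum_(i < n) g i * Y i w)%R]
    <= ((n%:R * c * (C / expR m%:R) + gamma * (1 + m%:R * expR 1 * C)) / c)%:E)%E.
Proof.
move=> c0.
pose f w := \sum_(i < n) (c * \1_[set z | expR m%:R < z] (Y i w)
                          + g i * exp_layer_bound m (Y i w)).
have mean_f : mean_le P f (\sum_(i < n) (c * (C / expR m%:R)
    + g i * (1 + \sum_(k < m) expR k.+1%:R * (C / expR k%:R)))).
  apply: mean_le_sum => i; apply: mean_leD.
    exact/mean_leZ/mean_le_indic_tail/expR_gt0/ltW.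
  apply/mean_leZ/mean_leD; [exact: ltW | exact: mean_le_cst |].
  apply: mean_le_sum => k; apply/mean_leZ/mean_le_indic_tail/expR_gt0.
  exact/ltW/expR_gt0.
have mE : measurable [set w | c < \sum_(i < n) g i * Y i w].
  by apply: measurable_fun_gt; apply: measurable_sum => i; exact: measurable_funM.
apply: le_trans (mean_le_markov mean_f mE c0 _) _.
  by move=> w; apply: le_sum_exp_layer_bounds => //; exact: ltW.
rewrite lee_fin ler_pM2r ?invr_gt0 // big_split /= sumr_const card_ord.
rewrite -[_ *+ n]mulr_natl [n%:R * _]mulrA lerD2l /gamma mulr_suml ler_sum // => i _.
rewrite (eq_bigr (fun=> expR 1 * C)) => [|k _]; last first.
  by rewrite -addn1 natrD expRD; field; rewrite gt_eqF // expR_gt0.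
by rewrite sumr_const card_ord -[expR 1 * C *+ m]mulr_natl mulrA.
Qed.

Lemma weak_tail_sum_log_le (t : R) : (3 <= n)%N -> 1 <= t ->
  (P [set w | (weak_sum_const C * gamma * t < \sum_(i < n) g i * Y i w)%R]
    <= ((2 * ln (n%:R * t)) / t)%:E)%E.
Proof.
move=> n3 t1; have t0 : 0 < t by apply: lt_le_trans t1.
have nt3 : 3 <= n%:R * t by rewrite -[3]mulr1 ler_pM // ler_nat.
have nt0 : 0 < n%:R * t by apply: lt_le_trans nt3.
set L := ln (n%:R * t); have L3 : ln 3 <= L by rewrite ler_ln ?posrE.
have gamma0 : 0 < gamma.
  rewrite /gamma (bigD1 (Ordinal (leq_trans (isT : 0 < 3)%N n3))) //=.
  by rewrite ltr_pwDl // sumr_ge0 // => i _; exact: ltW.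
set c := weak_sum_const C * gamma * t.
have c0 : 0 < c by rewrite !mulr_gt0 // weak_sum_const_gt0.
set K := C / ln 3.
have LK0 : 0 <= L + K.
  by rewrite addr_ge0 ?divr_ge0 // ltW // (lt_le_trans ln3_gt0).
set m := (Num.truncn (L + K)).+1.
have /andP[lo hi] := truncn_itv LK0.
have Km : L + K <= m%:R by exact: ltW.
have mK : m%:R <= L + K + 1 by rewrite -[m%:R]natr1 lerD2r.
apply: le_trans (weak_tail_sum_le _ m c0) _; rewrite lee_fin mulrDl.
rewrite (_ : 2 * L / t = L / t + L / t); last by ring.
apply: lerD.
  by rewrite mulrAC mulfK ?gt_eqF //; apply: top_layer_le; rewrite ?lnK ?posrE.
rewrite ler_pdivrMr // /c (_ : _ * (_ * gamma * t) = gamma * (weak_sum_const C * L)).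
  by rewrite ler_pM2l // layers_le_weak_sum_const.
by field; rewrite gt_eqF.
Qed.

End weak_tail_sums.

Theorem mainTheorem13 (R : realType) (p : R) :
  1 <= p -> p < 2 ->
  exists alpha : R, 0 < alpha /\
    forall (d : measure_display) (T : measurableType d) (P : probability T R)
      (n : nat) (X : 'I_n -> {RV P >-> R}) (g : 'I_n -> R) (t : R),
      (3 <= n)%N ->
      (forall i, has_std_stable_law P p (X i)) ->
      (forall i, 0 < g i) ->
      1 <= t ->
      (P [set w | (alpha * (\sum_(i < n) g i) * t
                    < \sum_(i < n) g i * (`|X i w| `^ p))%R]
        <= ((2 * ln (n%:R * t)) / t)%:E)%E.
Proof.
move=> p1 _; have p0 : 0 < p by apply: lt_le_trans p1.
have C0 : 0 <= stable_tail_const p by rewrite mulr_ge0 ?powR_ge0.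
exists (weak_sum_const (stable_tail_const p)); split; first exact: weak_sum_const_gt0.
move=> d T P n X g t n3 hX g0 t1.
have mX i : measurable_fun setT (X i) := measurable_funPT (X i).
apply: (weak_tail_sum_log_le P n (fun i w => `|X i w| `^ p)) => // i.
- exact/(measurableT_comp (measurable_powR p))/measurableT_comp.
- by move=> s s0; apply: stable_tail_powR.
Qed.
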